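(* Let $\alpha=(\alpha_1,\ldots,\alpha_m)$ be a partition of $n$ and let $r\in\mathbb{N}$ with $r\ge 1$. Then there is a natural isomorphism of species $$\mathbf{C}_{\alpha}\circ X^r=\mathbf{C}_{\alpha^r},$$ where $\alpha^r$ is the partition of $nr$ containing exactly $r$ copies of each part $\alpha_i$ of $\alpha$.
   Context: A (combinatorial) species is a functor from the category of finite sets with bijections to the category of finite sets with maps; equality of species means natural isomorphism. For a subgroup $H\le S_n$, the molecular species $X^n/H$ is defined by $(X^n/H)[U]=\{\lambda H:\lambda:[n]\to U \text{ a bijection}\}$, where $\lambda H=\{\lambda\circ f: f\in H\}$, and $(X^n/H)[\tau](\lambda H)=(\tau\circ\lambda)H$ for a bijection $\tau:U\to V$. For a partition $\alpha=(\alpha_1,\ldots,\alpha_k)$ of $n$, the standard permutation $\sigma_\alpha\in S_n$ is $(1,\ldots,\alpha_1)(\alpha_1+1,\ldots,\alpha_1+\alpha_2)\cdots$, i.e. the cycles of lengths $\alpha_1,\ldots,\alpha_k$ are filled with $1,\ldots,n$ in increasing order; and $\mathbf{C}_\alpha:=X^n/\langle\sigma_\alpha\rangle$. $X^r$ is the species of lists of length $r$ ($X^r[U]$ = set of bijections $[r]\to U$ if $|U|=r$, empty otherwise). For species $F,G$ with $G[\emptyset]=\emptyset$, the composition is $(F\circ G)[U]=\bigsqcup_{\pi}F[\pi]\times\prod_{B\in\pi}G[B]$, the union over set partitions $\pi$ of $U$, with the induced transport of structure. *)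

From HB Require Import structures.
From mathcomp Require Import all_boot all_fingroup.

Set Implicit Arguments.
Unset Strict Implicit.
Unset Printing Implicit Defensive.

Record bij (U V : finType) := Bij {
  bfun :> U -> V;
  binv : V -> U;
  bfunK : cancel bfun binv;
  binvK : cancel binv bfun }.

Lemma bij_card (U V : finType) (f : bij U V) : #|U| = #|V|.
Proof. by apply: bij_eq_card; exists (binv f); [exact: bfunK | exact: binvK]. Qed.

Lemma bij_inj (U V : finType) (f : bij U V) : injective f.
Proof. exact: can_inj (bfunK f). Qed.

(* A species: finite set of structures on each finite set U, with transport
   of structures along bijections.  (The functor laws are properties of the
   concrete species below; they are not needed to state natural isomorphism.) *)
Record species := Species {
  sp_obj : finType -> finType;
  sp_tr : forall U V : finType, bij U V -> sp_obj U -> sp_obj V }.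
Arguments sp_tr s {U V}.

Definition species_iso (F G : species) : Prop :=
  exists phi : forall U : finType, sp_obj F U -> sp_obj G U,
    (forall U : finType, bijective (phi U)) /\
    (forall (U V : finType) (f : bij U V) (x : sp_obj F U),
        phi V (sp_tr F f x) = sp_tr G f (phi U x)).

Definition postc (k : nat) (U V : finType) (f : bij U V) (l : {ffun 'I_k -> U}) :
  {ffun 'I_k -> V} := [ffun i => f (l i)].

Lemma postc_inj k (U V : finType) (f : bij U V) (l : {ffun 'I_k -> U}) :
  injectiveb l -> injectiveb (postc f l).
Proof.
move=> /injectiveP il; apply/injectiveP => i j; rewrite !ffunE.
by move/bij_inj/il.
Qed.

Definition is_bij_from (k : nat) (U : finType) (l : {ffun 'I_k -> U}) : bool :=
  injectiveb l && (#|U| == k).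

Definition Xr_obj (r : nat) (U : finType) : finType :=
  {l : {ffun 'I_r -> U} | is_bij_from l}.

Lemma postc_bij k (U V : finType) (f : bij U V) (l : {ffun 'I_k -> U}) :
  is_bij_from l -> is_bij_from (postc f l).
Proof.
by case/andP=> il c; rewrite /is_bij_from postc_inj //= -(bij_card f).
Qed.

Definition Xr_tr (r : nat) (U V : finType) (f : bij U V) (x : Xr_obj r U) :
  Xr_obj r V := exist _ (postc f (val x)) (postc_bij f (valP x)).

Definition Xr (r : nat) : species := @Species (Xr_obj r) (@Xr_tr r).

Section Molecular.
Variables (n : nat) (H : {set {perm 'I_n}}).

Definition coset_of_fun (U : finType) (l : {ffun 'I_n -> U}) :
  {set {ffun 'I_n -> U}} := [set [ffun i => l ((h : {perm 'I_n}) i)] | h in H].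

Definition is_mol (U : finType) (A : {set {ffun 'I_n -> U}}) : bool :=
  [exists l : {ffun 'I_n -> U}, is_bij_from l && (A == coset_of_fun l)].

Definition mol_obj (U : finType) : finType := {A : {set {ffun 'I_n -> U}} | is_mol A}.

Lemma mol_tr_proof (U V : finType) (f : bij U V) (A : {set {ffun 'I_n -> U}}) :
  is_mol A -> is_mol [set postc f l | l in A].
Proof.
case/existsP=> l /andP[bl /eqP->]; apply/existsP; exists (postc f l).
rewrite postc_bij //=; apply/eqP; rewrite /coset_of_fun -imset_comp.
by apply: eq_imset => h; apply/ffunP => i; rewrite !ffunE.
Qed.

Definition mol_tr (U V : finType) (f : bij U V) (x : mol_obj U) : mol_obj V :=
  exist _ [set postc f l | l in val x] (mol_tr_proof f (valP x)).

Definition mol : species := @Species mol_obj mol_tr.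
End Molecular.

(* std_next al off i : image of i under the permutation whose cycles are the
   consecutive blocks of lengths al (the first block starting at off), each
   filled in increasing order: (off, ..., off+a1-1)(off+a1, ...)... *)
Fixpoint std_next (al : seq nat) (off i : nat) : nat :=
  match al with
  | [::] => i
  | a :: al' =>
      if i < off + a then (if i.+1 < off + a then i.+1 else off)
      else std_next al' (off + a) i
  end.

Definition std_fun (n : nat) (al : seq nat) : {ffun 'I_n -> 'I_n} :=
  [ffun i : 'I_n => insubd i (std_next al 0 i)].

(* sigma_alpha in S_n (std_fun is a permutation whenever al is a partition
   of n; the default 1 is never used in that case) *)
Definition sigma_std (n : nat) (al : seq nat) : {perm 'I_n} :=
  insubd (1%g : {perm 'I_n}) (std_fun n al).

Definition Calpha (n : nat) (al : seq nat) : species :=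
  mol <[sigma_std n al]>%g.

Definition is_partition_of (al : seq nat) (n : nat) : bool :=
  [&& sorted geq al, all (fun a => 0 < a) al & sumn al == n].

Definition part_rep (al : seq nat) (r : nat) : seq nat :=
  flatten [seq nseq r a | a <- al].

Section SetBij.
Variables (U V : finType) (f : bij U V).

Lemma imsetK_bij (B : {set U}) : binv f @: (f @: B) = B.
Proof.
by rewrite -imset_comp (eq_imset _ (bfunK f)) imset_id.
Qed.

Lemma imsetKV_bij (B : {set V}) : f @: (binv f @: B) = B.
Proof.
by rewrite -imset_comp (eq_imset _ (binvK f)) imset_id.
Qed.

Definition setbij : bij {set U} {set V} :=
  @Bij _ _ (fun B : {set U} => f @: B) (fun B : {set V} => binv f @: B) imsetK_bij imsetKV_bij.

Variables (A : {set U}) (A' : {set V}).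
Hypothesis HA : forall x, (f x \in A') = (x \in A).

Lemma subbij_fwd x : x \in A -> f x \in A'.
Proof. by rewrite HA. Qed.
Lemma subbij_bwd y : y \in A' -> binv f y \in A.
Proof. by rewrite -HA binvK. Qed.

Definition subbij_f (x : {x : U | x \in A}) : {y : V | y \in A'} :=
  exist _ (f (val x)) (subbij_fwd (valP x)).
Definition subbij_g (y : {y : V | y \in A'}) : {x : U | x \in A} :=
  exist _ (binv f (val y)) (subbij_bwd (valP y)).
Lemma subbij_fK : cancel subbij_f subbij_g.
Proof. by move=> x; apply: val_inj; rewrite /= bfunK. Qed.
Lemma subbij_gK : cancel subbij_g subbij_f.
Proof. by move=> y; apply: val_inj; rewrite /= binvK. Qed.

Definition subbij : bij {x : U | x \in A} {y : V | y \in A'} :=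
  Bij subbij_fK subbij_gK.
End SetBij.

Definition part_type (U : finType) : finType :=
  {P : {set {set U}} | partition P [set: U]}.
Definition blocks (U : finType) (p : part_type U) : finType :=
  {B : {set U} | B \in val p}.
Definition elts (U : finType) (B : {set U}) : finType := {x : U | x \in B}.

Section Composition.
Variables (F G : species).

Definition comp_fiber (U : finType) (p : part_type U) : finType :=
  (sp_obj F (blocks p) * {dffun forall B : blocks p, sp_obj G (elts (val B))})%type.

Definition comp_obj (U : finType) : finType := {p : part_type U & comp_fiber p}.

Section Transport.
Variables (U V : finType) (f : bij U V).

Lemma part_tr_proof (P : {set {set U}}) :
  partition P [set: U] -> partition [set f @: (B : {set U}) | B in P] [set: V].
Proof.
have -> : [set: V] = f @: [set: U].
  apply/setP=> y; rewrite inE; apply/esym/imsetP; exists (binv f y) => //.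
  by rewrite binvK.
by rewrite imset_partition //; exact: bij_inj.
Qed.

Definition part_tr (p : part_type U) : part_type V :=
  exist _ [set f @: (B : {set U}) | B in val p] (part_tr_proof (valP p)).

Lemma blocks_cond (p : part_type U) (B : {set U}) :
  (setbij f B \in val (part_tr p)) = (B \in val p).
Proof. by rewrite /= mem_imset //; apply: imset_inj; exact: bij_inj. Qed.

Definition blocks_bij (p : part_type U) : bij (blocks p) (blocks (part_tr p)) :=
  subbij (@blocks_cond p).

Lemma elts_cond (p : part_type U) (B' : blocks (part_tr p)) (x : U) :
  (f x \in val B') = (x \in val (binv (blocks_bij p) B')).
Proof.
rewrite -{1}(binvK (blocks_bij p) B') /=.
by rewrite mem_imset //; exact: bij_inj.
Qed.

Definition comp_tr (x : comp_obj U) : comp_obj V :=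
  let p := tag x in
  let bb := blocks_bij p in
  existT (@comp_fiber V) (part_tr p)
    (sp_tr F bb (tagged x).1,
     @finfun (blocks (part_tr p)) (fun B' => sp_obj G (elts (val B')))
       (fun B' => sp_tr G (subbij (@elts_cond p B')) ((tagged x).2 (binv bb B')))).
End Transport.

Definition species_comp : species := @Species comp_obj comp_tr.
End Composition.
Arguments species_comp : clear implicits.
Arguments mol : clear implicits.
Arguments Calpha : clear implicits.
Arguments Xr : clear implicits.

(* A structure of C_alpha o X^r on U consists of a partition of U into n blocks
   of size r, a coset lambda <sigma_alpha> of orderings of the blocks, and an
   ordering of each block.  Fix a bijection E : [n] x [r] -> [nr] such that
   sigma_{alpha^r} (E (t, j)) = E (sigma_alpha t, j); it maps the j-th copy of
   each cycle of sigma_alpha onto a cycle of sigma_{alpha^r}.  Putting the j-th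
   element of the t-th block at position E (t, j) concatenates the orderings
   into a single bijection [nr] -> U, and since precomposing lambda with
   sigma_alpha^k amounts to precomposing the concatenation with
   sigma_{alpha^r}^k, cosets go to cosets.  This is natural in U, and the
   partition, lambda and the orderings of the blocks can be read back from the
   concatenation, so it is an isomorphism. *)

From HB Require Import structures.
From mathcomp Require Import all_boot all_fingroup.
From mathcomp Require Import zify.

Set Implicit Arguments.
Unset Strict Implicit.
Unset Printing Implicit Defensive.

(** * Composing a molecular species with X^r *)

Section ListsAsBijections.
Variables (k : nat) (X : finType) (l : {ffun 'I_k -> X}).
Hypothesis l_bij : is_bij_from l.

Lemma bij_from_inj : injective l.
Proof. by case/andP: l_bij => /injectiveP. Qed.

Lemma bij_from_card : #|X| = k.
Proof. by case/andP: l_bij => _ /eqP. Qed.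

Lemma bij_from_surj y : exists t, l t = y.
Proof.
have card_le : #|X| <= #|'I_k| by rewrite card_ord bij_from_card.
have [g lK gK] := inj_card_bij bij_from_inj card_le.
by exists (g y); rewrite gK.
Qed.

End ListsAsBijections.

Section Cosets.
Variables (n : nat) (H : {group {perm 'I_n}}) (U : finType).

Lemma mem_coset_of_fun (l : {ffun 'I_n -> U}) : l \in coset_of_fun H l.
Proof.
by apply/imsetP; exists 1%g => //; apply/ffunP => i; rewrite ffunE perm1.
Qed.

Lemma coset_of_fun_perm (h : {perm 'I_n}) (l : {ffun 'I_n -> U}) :
  h \in H -> coset_of_fun H [ffun i => l (h i)] = coset_of_fun H l.
Proof.
move=> hH; rewrite /coset_of_fun -[in RHS](rcoset_id hH) -rcosetE -imset_comp.
by apply: eq_imset => g /=; apply/ffunP => i; rewrite !ffunE permM.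
Qed.

End Cosets.

Definition lifts n r N (E : bij ('I_n * 'I_r)%type 'I_N)
    (h : {perm 'I_n}) (h' : {perm 'I_N}) : Prop :=
  forall t j, h' (E (t, j)) = E (h t, j).

Lemma liftsX n r N (E : bij ('I_n * 'I_r)%type 'I_N) s s' k :
  lifts E s s' -> lifts E (s ^+ k)%g (s' ^+ k)%g.
Proof.
move=> lift_s; elim: k => [|k IH] t j; first by rewrite !expg0 !perm1.
by rewrite !expgS !permM lift_s IH.
Qed.

Section CompositionWithLists.
Variables (n r N : nat) (E : bij ('I_n * 'I_r)%type 'I_N).
Variables (H : {group {perm 'I_n}}) (H' : {group {perm 'I_N}}).
Hypothesis lift_in : forall h, h \in H -> exists2 h', h' \in H' & lifts E h h'.
Hypothesis lift_onto : forall h', h' \in H' -> exists2 h, h \in H & lifts E h h'.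

Local Notation block_lists p :=
  {dffun forall B : blocks p, Xr_obj r (elts (val B))}.

Lemma defN : N = n * r.
Proof. by rewrite -[N]card_ord -(bij_card E) card_prod !card_ord. Qed.

Section Concat.
Variables (U : finType) (p : part_type U).
Implicit Types (l : {ffun 'I_n -> blocks p}) (L : block_lists p).

Definition concat l L : {ffun 'I_N -> U} :=
  [ffun q => val (val (L (l (binv E q).1)) (binv E q).2)].

Lemma concatE l L t j : concat l L (E (t, j)) = val (val (L (l t)) j).
Proof. by rewrite ffunE bfunK. Qed.

Lemma concat_perm h h' l L : lifts E h h' ->
  [ffun q => concat l L (h' q)] = concat [ffun t => l (h t)] L.
Proof.
move=> lift_h; apply/ffunP => q; rewrite -(binvK E q); case: (binv E q) => t j.
by rewrite ffunE lift_h !concatE ffunE.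
Qed.

Lemma concat_coset l L :
  [set concat l' L | l' in coset_of_fun H l] = coset_of_fun H' (concat l L).
Proof.
rewrite /coset_of_fun -imset_comp; apply/setP => m; apply/imsetP/imsetP.
- case=> h hH ->; have [h' h'H' lift_h] := lift_in hH.
  by exists h' => //=; rewrite (concat_perm _ _ lift_h).
- case=> h' h'H' ->; have [h hH lift_h] := lift_onto h'H'.
  by exists h => //=; rewrite (concat_perm _ _ lift_h).
Qed.

Lemma block_lists_card (L : block_lists p) A : A \in val p -> #|A| = r.
Proof.
by move=> pA; rewrite -(bij_from_card (valP (L (exist _ A pA)))) card_sig.
Qed.

Lemma block_concat l L t : val (l t) = [set concat l L (E (t, j)) | j : 'I_r].
Proof.
apply/setP => u; apply/idP/imsetP => [ltu | [j _ ->]].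
  have [j lj] := bij_from_surj (valP (L (l t))) (exist _ u ltu).
  by exists j => //; rewrite concatE lj.
by rewrite concatE; exact: (valP (val (L (l t)) j)).
Qed.

Lemma partition_concat l L : is_bij_from l ->
  val p = [set [set concat l L (E (t, j)) | j : 'I_r] | t : 'I_n].
Proof.
move=> l_bij; apply/setP => B; apply/idP/imsetP => [pB | [t _ ->]].
  have [t lt] := bij_from_surj l_bij (exist _ B pB).
  by exists t => //; rewrite -block_concat lt.
by rewrite -block_concat; exact: (valP (l t)).
Qed.

Lemma concat_bij l L : is_bij_from l -> is_bij_from (concat l L).
Proof.
move=> l_bij; apply/andP; split.
  apply/injectiveP => q q'; rewrite -(binvK E q) -(binvK E q').
  case: (binv E q) => t j; case: (binv E q') => t' j'; rewrite !concatE => e.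
  have /bij_from_inj lt : l t = l t'.
    case/and3P: (valP p) => _ triv_p _; apply: val_inj.
    rewrite -(def_pblock triv_p (valP (l t)) (valP (val (L (l t)) j))) e.
    by rewrite (def_pblock triv_p (valP (l t')) (valP (val (L (l t')) j'))).
  rewrite -{}(lt l_bij) in e *.
  by move: e => /val_inj/(bij_from_inj (valP (L (l t)))) ->.
rewrite defN -cardsT (card_partition (valP p)) /=.
rewrite (eq_bigr (fun _ => r)) => [|A]; last exact: block_lists_card.
rewrite sum_nat_const -(bij_from_card l_bij) card_sig.
by apply/eqP; congr (_ * _); apply: eq_card.
Qed.

Lemma concat_inj l1 l2 L1 L2 : is_bij_from l1 ->
  concat l1 L1 = concat l2 L2 -> l1 = l2 /\ L1 = L2.
Proof.
move=> l1_bij e; have el : l1 = l2.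
  apply/ffunP => t; apply: val_inj.
  by rewrite (block_concat l1 L1) (block_concat l2 L2) e.
split=> //; subst l2; apply/ffunP => B; have [t <-] := bij_from_surj l1_bij B.
by apply/val_inj/ffunP => j; apply: val_inj; rewrite -!concatE e.
Qed.

End Concat.

Local Notation comp_mol_Xr := (species_comp (mol n H) (Xr r)).

Definition comp_to_mol_set U (x : sp_obj comp_mol_Xr U) : {set {ffun 'I_N -> U}} :=
  [set concat l (tagged x).2 | l in val (tagged x).1].

Lemma comp_to_mol_proof U (x : sp_obj comp_mol_Xr U) : is_mol H' (comp_to_mol_set x).
Proof.
case: x => p [[A molA] L]; rewrite /comp_to_mol_set /=.
case/existsP: (molA) => l /andP[l_bij /eqP ->].
by apply/existsP; exists (concat l L); rewrite concat_bij //= concat_coset eqxx.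
Qed.

Definition comp_to_mol U (x : sp_obj comp_mol_Xr U) : sp_obj (mol N H') U :=
  exist _ (comp_to_mol_set x) (comp_to_mol_proof x).

Lemma comp_to_mol_nat (U V : finType) (f : bij U V) (x : sp_obj comp_mol_Xr U) :
  comp_to_mol (sp_tr comp_mol_Xr f x) = sp_tr (mol N H') f (comp_to_mol x).
Proof.
apply: val_inj; case: x => p [[A molA] L].
rewrite /= /comp_to_mol_set /= -!imset_comp; apply: eq_imset => l /=.
apply/ffunP => q; rewrite !ffunE /=; congr (f (val (val (L _) _))).
exact: subbij_fK.
Qed.

Lemma comp_to_mol_inj U : injective (@comp_to_mol U).
Proof.
move=> [p1 [[A1 molA1] L1]] [p2 [[A2 molA2] L2]] /(congr1 val) /=.
rewrite /comp_to_mol_set /=.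
have /existsP[l1 /andP[l1_bij /eqP eA1]] := molA1.
have /existsP[l2 /andP[l2_bij /eqP eA2]] := molA2.
rewrite {1}eA1 {1}eA2 !concat_coset => e.
have /imsetP[h' h'H' e12] : concat l2 L2 \in coset_of_fun H' (concat l1 L1).
  by rewrite e mem_coset_of_fun.
have [h hH lift_h] := lift_onto h'H'.
rewrite (concat_perm _ _ lift_h) in e12.
set l1' := [ffun t => l1 (h t)] in e12.
have l1'_bij : is_bij_from l1'.
  rewrite /is_bij_from andbC; case/andP: l1_bij => /injectiveP l1_inj ->.
  by apply/injectiveP => t t'; rewrite !ffunE => /l1_inj/perm_inj.
have ep : p1 = p2.
  apply: val_inj.
  by rewrite (partition_concat L1 l1'_bij) (partition_concat L2 l2_bij) e12.
subst p2; have [el eL] := concat_inj l2_bij e12; subst l2 L2.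
have -> // : exist _ A1 molA1 = exist _ A2 molA2 :> mol_obj H (blocks p1).
by apply: val_inj; rewrite /= eA1 eA2 coset_of_fun_perm.
Qed.

Hypothesis r_gt0 : 0 < r.

Section Preimage.
Variables (U : finType) (m : {ffun 'I_N -> U}) (minv : U -> 'I_N).
Hypotheses (mK : cancel m minv) (minvK : cancel minv m).

Definition block_at (t : 'I_n) : {set U} := [set m (E (t, j)) | j : 'I_r].

Lemma mem_block_at u t : (u \in block_at t) = ((binv E (minv u)).1 == t).
Proof.
apply/imsetP/eqP => [[j _ ->] | <-]; first by rewrite mK bfunK.
by exists (binv E (minv u)).2; rewrite // -surjective_pairing binvK minvK.
Qed.

Lemma block_at_inj : injective block_at.
Proof.
move=> t t' e; have : m (E (t, Ordinal r_gt0)) \in block_at t'.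
  by rewrite -e; apply: imset_f.
by rewrite mem_block_at mK bfunK => /eqP.
Qed.

Lemma partition_block_at : partition (block_at @: setT) [set: U].
Proof.
apply/and3P; split.
- apply/eqP/setP => u; rewrite inE; apply/bigcupP.
  by exists (block_at (binv E (minv u)).1); rewrite ?imset_f ?mem_block_at.
- apply/trivIsetP => _ _ /imsetP[t _ ->] /imsetP[t' _ ->] ne_tt'.
  rewrite -setI_eq0; apply/eqP/setP => u; rewrite !inE !mem_block_at.
  by apply/negP => /andP[/eqP et /eqP et']; rewrite -et -et' eqxx in ne_tt'.
- apply/imsetP => [[t _ e]].
  have : m (E (t, Ordinal r_gt0)) \in block_at t by apply: imset_f.
  by rewrite -e inE.
Qed.

Definition partition_of_list : part_type U :=
  exist _ (block_at @: setT) partition_block_at.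

Definition block_sig t : blocks partition_of_list :=
  exist _ (block_at t) (imset_f block_at (in_setT t)).

Definition blocks_of_list : {ffun 'I_n -> blocks partition_of_list} :=
  [ffun t => block_sig t].

Lemma blocks_of_list_bij : is_bij_from blocks_of_list.
Proof.
apply/andP; split.
  by apply/injectiveP => t t'; rewrite !ffunE => /(congr1 val)/block_at_inj.
rewrite card_sig (eq_card (B := block_at @: setT)) //.
by rewrite card_imset ?cardsT ?card_ord //; exact: block_at_inj.
Qed.

Implicit Type B : blocks partition_of_list.

Lemma block_index_ex B : exists t, val B == block_at t.
Proof. by case/imsetP: (valP B) => t _ ->; exists t. Qed.

Definition block_index B : 'I_n := xchoose (block_index_ex B).

Lemma block_indexK B : val B = block_at (block_index B).
Proof. exact/eqP/(xchooseP (block_index_ex B)). Qed.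

Lemma block_index_sig t : block_index (block_sig t) = t.
Proof. by apply: block_at_inj; rewrite -block_indexK. Qed.

Lemma mem_block_index B j : m (E (block_index B, j)) \in val B.
Proof. by rewrite block_indexK; apply: imset_f. Qed.

Definition sublist B : {ffun 'I_r -> elts (val B)} :=
  [ffun j => exist _ (m (E (block_index B, j))) (mem_block_index B j)].

Lemma sublist_bij B : is_bij_from (sublist B).
Proof.
apply/andP; split.
  apply/injectiveP => j j'; rewrite !ffunE => /(congr1 val) /=.
  by move/(can_inj mK)/(can_inj (bfunK E)) => [].
rewrite card_sig (eq_card (B := val B)) // block_indexK card_imset ?card_ord //.
by move=> j j' /(can_inj mK)/(can_inj (bfunK E)) [].
Qed.

Definition sublists : block_lists partition_of_list :=
  [ffun B => exist _ (sublist B) (sublist_bij B)].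

Lemma concat_sublists : concat blocks_of_list sublists = m.
Proof.
apply/ffunP => q; rewrite -(binvK E q); case: (binv E q) => t j.
by rewrite concatE !ffunE /= block_index_sig.
Qed.

End Preimage.

Lemma comp_to_mol_surj U (y : sp_obj (mol N H') U) : exists x, comp_to_mol x = y.
Proof.
case: y => Y molY; have /existsP[m /andP[m_bij /eqP eY]] := molY.
have card_le : #|U| <= #|'I_N| by rewrite card_ord (bij_from_card m_bij).
have [minv mK minvK] := inj_card_bij (bij_from_inj m_bij) card_le.
pose A := coset_of_fun H (blocks_of_list mK minvK).
have molA : is_mol H A.
  apply/existsP; exists (blocks_of_list mK minvK).
  by rewrite blocks_of_list_bij eqxx.
exists (existT _ (partition_of_list mK minvK) (exist _ A molA, sublists mK minvK)).
by apply: val_inj; rewrite /= /comp_to_mol_set /= concat_coset concat_sublists.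
Qed.

Lemma comp_mol_Xr_iso : species_iso comp_mol_Xr (mol N H').
Proof.
exists comp_to_mol; split=> [U|]; last exact: comp_to_mol_nat.
apply: inj_card_bij; first exact: comp_to_mol_inj.
rewrite -(card_codom (@comp_to_mol_inj U)); apply/subset_leq_card/subsetP => y _.
by have [x <-] := comp_to_mol_surj y; apply: codom_f.
Qed.

End CompositionWithLists.

Lemma comp_cycle_Xr_iso n r N (E : bij ('I_n * 'I_r)%type 'I_N) s s' :
  0 < r -> lifts E s s' ->
  species_iso (species_comp (mol n <[s]>%g) (Xr r)) (mol N <[s']>%g).
Proof.
move=> r_gt0 lift_s.
apply: (comp_mol_Xr_iso (E := E) (H := <[s]>%G) (H' := <[s']>%G) _ _ r_gt0).
- by move=> _ /cycleP[k ->]; exists (s' ^+ k)%g; [exact: mem_cycle | exact: liftsX].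
- by move=> _ /cycleP[k ->]; exists (s ^+ k)%g; [exact: mem_cycle | exact: liftsX].
Qed.

(** * The standard permutation of alpha^r *)

Lemma std_next_range al off t : off <= t < off + sumn al ->
  off <= std_next al off t < off + sumn al.
Proof.
elim: al off => [|a al IH] off /=; first by lia.
by move=> t_in; have := IH (off + a); repeat case: ifP => ?; lia.
Qed.

Lemma std_next_inj al off t t' :
  off <= t < off + sumn al -> off <= t' < off + sumn al ->
  std_next al off t = std_next al off t' -> t = t'.
Proof.
elim: al off => [|a al IH] off /=; first by lia.
move=> t_in t'_in; have := IH (off + a).
have := @std_next_range al (off + a) t; have := @std_next_range al (off + a) t'.
by repeat case: ifP => ?; lia.
Qed.

Lemma std_next_cat al1 al2 off t : off <= t ->
  std_next (al1 ++ al2) off t =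
  if t < off + sumn al1 then std_next al1 off t
  else std_next al2 (off + sumn al1) t.
Proof.
elim: al1 off => [|a al1 IH] off /= le_off_t; first by rewrite addn0 ltnNge le_off_t.
case: ifP => [lt_t|ge_t]; first by have -> : t < off + (a + sumn al1) by lia.
by rewrite IH ?addnA //; lia.
Qed.

Lemma std_next_nseq r a off c i : c < r -> i < a ->
  std_next (nseq r a) off (off + (c * a + i)) =
  off + (c * a + (if i.+1 < a then i.+1 else 0)).
Proof.
elim: r off c => [|r IH] off [|c] //= lt_c lt_i.
  by rewrite mul0n !add0n; repeat case: ifP => ?; lia.
rewrite ifF; last by lia.
have -> : off + (c.+1 * a + i) = off + a + (c * a + i) by rewrite mulSn; lia.
by rewrite IH // mulSn !addnA.
Qed.

Lemma sumn_part_rep al r : sumn (part_rep al r) = r * sumn al.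
Proof.
elim: al => [|a al IH] /=; first by rewrite muln0.
by rewrite /part_rep /= sumn_cat -/(part_rep al r) IH sumn_nseq mulnDr mulnC.
Qed.

Lemma mixed_radix_lt r a j i : j < r -> i < a -> j * a + i < r * a.
Proof.
move=> lt_j lt_i; apply: (@leq_trans (j.+1 * a)).
  by rewrite mulSn addnC ltn_add2r.
by rewrite leq_mul2r lt_j orbT.
Qed.

Lemma mixed_radix_inj a j i j' i' : i < a -> i' < a ->
  j * a + i = j' * a + i' -> j = j' /\ i = i'.
Proof.
move=> lt_i lt_i' e; have a_gt0 : 0 < a by lia.
have := congr1 (divn^~ a) e; have := congr1 (modn^~ a) e => /=.
by rewrite !modnMDl !divnMDl // !modn_small // !divn_small // !addn0.
Qed.

(* The cycles of [al] start at [off] and those of [part_rep al r] at [off']: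
   the [j]-th copy of the cycle of length [a] starting at [off] is the cycle
   starting at [off' + j * a], and [t] keeps its position within its cycle. *)
Fixpoint rep_index (r : nat) (al : seq nat) (off off' t j : nat) : nat :=
  match al with
  | [::] => 0
  | a :: al' =>
      if t < off + a then off' + (j * a + (t - off))
      else rep_index r al' (off + a) (off' + r * a) t j
  end.

Lemma rep_index_range r al off off' t j : off <= t < off + sumn al -> j < r ->
  off' <= rep_index r al off off' t j < off' + r * sumn al.
Proof.
elim: al off off' => [|a al IH] off off' /=; first by lia.
move=> t_in lt_j; rewrite mulnDr; case: ifP => lt_t.
  have : j * a + (t - off) < r * a by apply: mixed_radix_lt; lia.
  lia.
by have := IH (off + a) (off' + r * a); lia.
Qed.

Lemma rep_index_inj r al off off' t j t' j' :
  off <= t < off + sumn al -> j < r -> off <= t' < off + sumn al -> j' < r ->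
  rep_index r al off off' t j = rep_index r al off off' t' j' -> t = t' /\ j = j'.
Proof.
elim: al off off' => [|a al IH] off off' /=; first by lia.
move=> t_in lt_j t'_in lt_j'.
have range := @rep_index_range r al (off + a) (off' + r * a) t j.
have range' := @rep_index_range r al (off + a) (off' + r * a) t' j'.
have := @mixed_radix_lt r a j (t - off) lt_j.
have := @mixed_radix_lt r a j' (t' - off) lt_j'.
case: ifP => lt_t; case: ifP => lt_t' bound' bound e.
- have [] := @mixed_radix_inj a j (t - off) j' (t' - off); lia.
- have := range' _ lt_j'; lia.
- have := range _ lt_j; lia.
- apply: IH e; lia.
Qed.

Lemma std_next_rep_index r al off off' t j : off <= t < off + sumn al -> j < r ->
  std_next (part_rep al r) off' (rep_index r al off off' t j) =
  rep_index r al off off' (std_next al off t) j.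
Proof.
elim: al off off' => [|a al IH] off off' /=; first by lia.
move=> t_in lt_j; rewrite /part_rep /= -/(part_rep al r).
case: ifP => lt_t.
  have bound : j * a + (t - off) < r * a by apply: mixed_radix_lt; lia.
  rewrite std_next_cat ?sumn_nseq; last by lia.
  rewrite ifT; last by lia.
  rewrite std_next_nseq //; last by lia.
  have a_gt0 : 0 < a by lia.
  case: (ltnP t.+1 (off + a)) => [lt_t1 | ge_t1].
    have -> : (t - off).+1 < a by lia.
    by rewrite /= lt_t1; lia.
  have -> : (t - off).+1 < a = false by lia.
  have -> : off < off + a by lia.
  by rewrite subnn addn0.
have range := @rep_index_range r al (off + a) (off' + r * a) t j.
have next_range := @std_next_range al (off + a) t.
rewrite std_next_cat ?sumn_nseq; last by lia.
rewrite ifF; last by lia.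
rewrite ifF; last by lia.
by rewrite [a * r]mulnC IH //; lia.
Qed.

Section StandardPermutation.
Variables (n : nat) (al : seq nat).
Hypothesis sum_al : sumn al = n.

Lemma std_next_ord (t : 'I_n) : std_next al 0 t < n.
Proof.
by have := @std_next_range al 0 t; rewrite sum_al => /(_ (ltn_ord t)) /andP[].
Qed.

Lemma std_fun_val t : val (std_fun n al t) = std_next al 0 t.
Proof. by rewrite ffunE val_insubd std_next_ord. Qed.

Lemma std_fun_inj : injectiveb (std_fun n al).
Proof.
apply/injectiveP => t t' /(congr1 val); rewrite !std_fun_val => /std_next_inj e.
by apply: val_inj; apply: e; rewrite /= sum_al ltn_ord.
Qed.

Lemma sigma_std_val t : val (sigma_std n al t) = std_next al 0 t.
Proof. by rewrite /sigma_std -pvalE insubdK ?std_fun_val //; exact: std_fun_inj. Qed.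

End StandardPermutation.

Lemma sigma_std_part_rep_lift n al r : sumn al = n ->
  exists E : bij ('I_n * 'I_r)%type 'I_(n * r),
    lifts E (sigma_std n al) (sigma_std (n * r) (part_rep al r)).
Proof.
move=> sum_al; have sum_rep : sumn (part_rep al r) = n * r.
  by rewrite sumn_part_rep sum_al mulnC.
have t_in (t : 'I_n) : 0 <= t < 0 + sumn al by rewrite sum_al ltn_ord.
have rep_lt (p : 'I_n * 'I_r) : rep_index r al 0 0 p.1 p.2 < n * r.
  have /andP[_] := rep_index_range 0 (t_in p.1) (ltn_ord p.2).
  by rewrite sum_al mulnC.
pose E p : 'I_(n * r) := Ordinal (rep_lt p).
have E_inj : injective E.
  move=> [t j] [t' j'] /(congr1 val) /= /rep_index_inj.
  by case/(_ (t_in t) (ltn_ord j) (t_in t') (ltn_ord j')) => /val_inj-> /val_inj->.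
have card_le : #|'I_(n * r)| <= #|{: 'I_n * 'I_r}| by rewrite card_prod !card_ord.
have [Einv EK EinvK] := inj_card_bij E_inj card_le.
exists (Bij EK EinvK) => t j; apply: val_inj => /=.
by rewrite !sigma_std_val // std_next_rep_index.
Qed.

Theorem mainTheorem1 (n : nat) (al : seq nat) (r : nat) :
  is_partition_of al n -> 1 <= r ->
  species_iso (species_comp (Calpha n al) (Xr r)) (Calpha (n * r) (part_rep al r)).
Proof.
case/and3P => _ _ /eqP sum_al r_gt0.
have [E lift_sigma] := sigma_std_part_rep_lift r sum_al.
exact: comp_cycle_Xr_iso r_gt0 lift_sigma.
Qed.
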